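(* Let $G$ be a finite soluble group and $N$ a minimal normal subgroup of $G$. If $t\in G$ is an involution, then $\mathrm d(t,N)\le 1$ in $\Gamma(G)$. Moreover, if $x\in G\setminus\{1\}$ satisfies $\mathrm d(x,N)>3$ and $y\in\langle x\rangle$ has prime order, then both $C_G(y)$ and $x$ have odd order.
   Context: For a group $G$, the normalising graph $\Gamma(G)$ has vertex set $G\setminus\{1\}$, and two distinct vertices $x,y$ are adjacent if and only if $\langle x\rangle$ normalises $\langle y\rangle$ or $\langle y\rangle$ normalises $\langle x\rangle$. $\mathrm d$ is graph distance (infinite if there is no path), and $\mathrm d(x,N)=\min\{\mathrm d(x,n):n\in N\setminus\{1\}\}$, which is $0$ if $x\in N$. *)

From mathcomp Require Import all_boot all_fingroup all_solvable.
Set Implicit Arguments. Unset Strict Implicit. Unset Printing Implicit Defensive.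
Local Open Scope group_scope.

(* Normalising graph Gamma(G): vertex set G \ {1}; distinct x, y adjacent iff
   <x> normalises <y> or <y> normalises <x>. *)
Definition norm_adj (gT : finGroupType) (G : {set gT}) : rel gT :=
  fun x y => [&& x \in G^#, y \in G^#, x != y &
     (<[x]> \subset 'N(<[y]>)) || (<[y]> \subset 'N(<[x]>))].

(* d(x,y) <= k in Gamma(G): there is a walk of length at most k from x to y
   (x, y vertices of Gamma(G)). Length-0 walk: x = y. *)
Definition dist_le (gT : finGroupType) (G : {set gT}) (x y : gT) (k : nat) : Prop :=
  x \in G^# /\ exists p : seq gT,
    [/\ path (norm_adj G) x p, last x p = y & (size p <= k)%N].

(* d(x,N) <= k, where d(x,N) = min { d(x,n) : n in N \ {1} }. *)
Definition distN_le (gT : finGroupType) (G N : {set gT}) (x : gT) (k : nat) : Prop :=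
  exists2 n, n \in N^# & dist_le G x n k.

From mathcomp Require Import all_boot all_fingroup all_solvable.
Set Implicit Arguments.
Unset Strict Implicit.
Unset Printing Implicit Defensive.
Local Open Scope group_scope.

(* An involution t normalising a nontrivial subgroup N is adjacent to some
   n in N^#: pick any n in N^#; either t centralises n, or t inverts the
   nontrivial element n^-1 * n^t of N.  Thus d(t, N) <= 1.  If C_G(y) has
   even order for some y in <x>^#, Cauchy gives an involution t commuting
   with y, and x - y - t - n is a walk of length 3 into N^#; so d(x, N) > 3
   forces C_G(y), and hence x (which lies in C_G(y)), to have odd order. *)

Section NormalisingGraphWalks.

Variables (gT : finGroupType) (G : {set gT}).

Lemma dist_le_cat x y z a b :
  dist_le G x y a -> dist_le G y z b -> dist_le G x z (a + b).
Proof.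
move=> [Gx [p [px_p last_p size_p]]] [_ [q [py_q last_q size_q]]].
split=> //; exists (p ++ q).
by rewrite cat_path last_cat last_p px_p py_q last_q size_cat leq_add.
Qed.

Lemma dist_le_norm x y :
  x \in G^# -> y \in G^# -> <[x]> \subset 'N(<[y]>) -> dist_le G x y 1.
Proof.
move=> Gx Gy nyx; split=> //.
have [<-|neq_xy] := eqVneq x y; first by exists [::].
by exists [:: y]; rewrite /= /norm_adj Gx Gy neq_xy nyx.
Qed.

Lemma dist_le_commute x y :
  x \in G^# -> y \in G^# -> commute x y -> dist_le G x y 1.
Proof.
by move=> Gx Gy cxy; apply: dist_le_norm; rewrite ?cents_norm ?cents_cycle.
Qed.

End NormalisingGraphWalks.

Lemma commute_mem_cycle (gT : finGroupType) (x y : gT) :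
  y \in <[x]> -> commute x y.
Proof. by case/cycleP=> k ->; apply: commuteX. Qed.

Lemma cycle_norm_inverted (gT : finGroupType) (t m : gT) :
  m ^ t = m^-1 -> t \in 'N(<[m]>).
Proof. by move=> mt; apply/normP; rewrite -cycleJ mt cycleV. Qed.

Lemma involution_norm_cycle_nontrivial (gT : finGroupType) (N : {group gT}) t :
  #[t] = 2 -> t \in 'N(N) -> N :!=: 1 ->
  exists2 n, n \in N^# & <[t]> \subset 'N(<[n]>).
Proof.
move=> ot nNt ntN; have [n Nn ntn] := trivgPn _ ntN.
have tt : t * t = 1 by rewrite -(expg_order t) ot.
set m := n^-1 * n ^ t.
have Nm : m \in N by rewrite groupM ?groupV ?memJ_norm.
have [m1|ntm] := eqVneq m 1.
  exists n; first by rewrite !inE ntn.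
  rewrite cycle_subG; apply/normP; rewrite -cycleJ.
  by rewrite -(mulKVg n (n ^ t)) -/m m1 mulg1.
exists m; first by rewrite !inE ntm.
rewrite cycle_subG; apply: cycle_norm_inverted.
by rewrite /m conjMg conjVg -conjgM tt conjg1 [RHS]invMg invgK.
Qed.

Lemma involution_distN_le1 (gT : finGroupType) (G N : {group gT}) t :
  N \subset G -> N :!=: 1 -> t \in G -> t \in 'N(N) -> #[t] = 2 ->
  distN_le G N t 1.
Proof.
move=> sNG ntN Gt nNt ot.
have [n Nn ntn] := involution_norm_cycle_nontrivial ot nNt ntN.
have ntt : t != 1 by rewrite -order_gt1 ot.
exists n => //; apply: dist_le_norm => //; first by rewrite !inE ntt.
by move: Nn; rewrite !inE => /andP[-> /(subsetP sNG)].
Qed.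

Lemma even_cent_distN_le3 (gT : finGroupType) (G N : {group gT}) x y :
  N \subset G -> N :!=: 1 -> G \subset 'N(N) ->
  x \in G^# -> y \in <[x]> -> y != 1 -> ~~ odd #|'C_G[y]| ->
  distN_le G N x 3.
Proof.
move=> sNG ntN nNG G1x xy nty.
rewrite -dvdn2 => /(Cauchy (isT : prime 2))[t /setIP[Gt /cent1P cty] ot].
have Gx : x \in G by case/setD1P: G1x.
have Gy : y \in G by apply: subsetP xy; rewrite cycle_subG.
have G1y : y \in G^# by rewrite !inE nty.
have ntt : t != 1 by rewrite -order_gt1 ot.
have [n N1n dtn] := involution_distN_le1 sNG ntN Gt (subsetP nNG t Gt) ot.
exists n => //; apply: (@dist_le_cat _ _ _ y _ 1 2).
  exact: dist_le_commute (commute_mem_cycle xy).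
apply: (@dist_le_cat _ _ _ t _ 1 1) dtn.
by apply: dist_le_commute; rewrite // !inE ntt.
Qed.

Theorem mainTheorem7 (gT : finGroupType) (G N : {group gT}) :
  solvable G -> N \subset G -> minnormal N G ->
  (forall t : gT, t \in G -> #[t] = 2 -> distN_le G N t 1) /\
  (forall x y : gT, x \in G^# -> ~ distN_le G N x 3 ->
     y \in <[x]> -> prime #[y] -> odd #|'C_G[y]| /\ odd #[x]).
Proof.
move=> _ sNG /mingroupp/andP[ntN nNG]; split=> [t Gt|x y G1x farN xy pr_y].
  exact: involution_distN_le1 (subsetP nNG t Gt).
have nty : y != 1 by rewrite -order_gt1 prime_gt1.
have oddC : odd #|'C_G[y]|.
  by apply/negPn/negP => /(even_cent_distN_le3 sNG ntN nNG G1x xy nty).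
have Cx : x \in 'C_G[y].
  by case/setD1P: G1x => _ Gx; rewrite inE Gx; apply/cent1P/commute_mem_cycle.
by split=> //; apply: dvdn_odd (order_dvdG Cx) oddC.
Qed.
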